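(* For every base $\mathscr{B}$ and IPL formulas $\varphi,\psi,\chi$: if $\Vdash^{*}_{\mathscr{B}}\varphi\wedge\psi$ and $\varphi,\psi\Vdash^{*}_{\mathscr{B}}\chi$, then $\Vdash^{*}_{\mathscr{B}}\chi$.
   Context: Fix a denumerable set $\mathbb{A}$ of atoms. IPL formulas are built from atoms and $\bot$ using $\wedge,\vee,\to$. An atomic rule has the form $(Q_1\triangleright q_1,\dots,Q_n\triangleright q_n)\Rightarrow q$ with $n\ge 0$, $q,q_i\in\mathbb{A}$, $Q_i$ finite sets of atoms; a base is a set of atomic rules. Derivability $\vdash_{\mathscr{B}}$ is the least relation with $S\cup\{q\}\vdash_{\mathscr{B}} q$, and if $(Q_1\triangleright q_1,\dots,Q_n\triangleright q_n)\Rightarrow q\in\mathscr{B}$ and $S\cup Q_i\vdash_{\mathscr{B}} q_i$ for all $i$ then $S\vdash_{\mathscr{B}} q$. $\Vdash^{*}_{\mathscr{B}}$ is defined inductively: $\Vdash^{*}_{\mathscr{B}}p$ iff $\emptyset\vdash_{\mathscr{B}}p$; $\Vdash^{*}_{\mathscr{B}}\varphi\to\psi$ iff $\varphi\Vdash^{*}_{\mathscr{B}}\psi$; $\Vdash^{*}_{\mathscr{B}}\varphi\wedge\psi$ iff for all $\mathscr{C}\supseteq\mathscr{B}$ and atoms $p$, $\varphi,\psi\Vdash^{*}_{\mathscr{C}}p$ implies $\Vdash^{*}_{\mathscr{C}}p$; $\Vdash^{*}_{\mathscr{B}}\varphi\vee\psi$ iff for all $\mathscr{C}\supseteq\mathscr{B}$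 and atoms $p$, if $\varphi\Vdash^{*}_{\mathscr{C}}p$ and $\psi\Vdash^{*}_{\mathscr{C}}p$ then $\Vdash^{*}_{\mathscr{C}}p$; $\Vdash^{*}_{\mathscr{B}}\bot$ iff $\Vdash^{*}_{\mathscr{B}}p$ for all atoms $p$; for nonempty finite $\Gamma$, $\Gamma\Vdash^{*}_{\mathscr{B}}\varphi$ iff for every $\mathscr{C}\supseteq\mathscr{B}$, if $\Vdash^{*}_{\mathscr{C}}\psi$ for all $\psi\in\Gamma$ then $\Vdash^{*}_{\mathscr{C}}\varphi$. *)

(* Base-extension semantics for IPL (Sandqvist-style). *)
From Stdlib Require Import List.
Import ListNotations.

Definition atom := nat.

Inductive form : Type :=
| Atom : atom -> form
| Bot : form
| And : form -> form -> form
| Or : form -> form -> form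
| Imp : form -> form -> form.

(* Atomic rule (Q_1 |> q_1, ..., Q_n |> q_n) => q ; finite sets of atoms
   are represented by lists (only membership matters). *)
Record rule : Type := mkRule {
  premises : list (list atom * atom);
  conclusion : atom }.

Definition base := rule -> Prop.

Definition extends (C B : base) : Prop := forall r, B r -> C r.

Inductive derives (B : base) : list atom -> atom -> Prop :=
| der_ref : forall S q, In q S -> derives B S q
| der_rule : forall S r, B r ->
    (forall pq, In pq (premises r) -> derives B (fst pq ++ S) (snd pq)) ->
    derives B S (conclusion r).

Fixpoint supp (B : base) (phi : form) : Prop :=
  match phi with
  | Atom p => derives B [] p
  | Bot => forall p : atom, derives B [] p
  | Imp a b => forall C, extends C B -> supp C a -> supp C b
  | And a b => forall C, extends C B -> forall p : atom,
      (forall D, extends D C -> supp D a -> supp D b -> derives D [] p) ->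
      derives C [] p
  | Or a b => forall C, extends C B -> forall p : atom,
      (forall D, extends D C -> supp D a -> derives D [] p) ->
      (forall D, extends D C -> supp D b -> derives D [] p) ->
      derives C [] p
  end.

Definition supp_ctx (B : base) (Gamma : list form) (phi : form) : Prop :=
  forall C, extends C B -> (forall g, In g Gamma -> supp C g) -> supp C phi.

(* The support clause for a conjunction only licenses eliminations into
   atoms.  We isolate that clause as a property [atomic_elim B G] of a
   predicate G on bases ("every atom derivable in all G-extensions of an
   extension C is already derivable in C") and prove, by induction on chi,
   that such an atomic elimination principle lifts to an elimination into
   arbitrary formulas.  The atomic, bottom, conjunction and disjunction cases
   reduce to atoms directly; the implication case needs that support (and
   hence the hypothesis) is preserved under base extension, which follows
   from monotonicity of derivability.  The theorem is the instance
   G D := supp D phi /\ supp D psi. *)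
From Stdlib Require Import List.
Import ListNotations.

Lemma extends_refl (B : base) : extends B B.
Proof. unfold extends; auto. Qed.

Lemma extends_trans (A B C : base) : extends A B -> extends B C -> extends A C.
Proof. unfold extends; auto. Qed.

Lemma derives_mono (B C : base) (S : list atom) (q : atom) :
  extends C B -> derives B S q -> derives C S q.
Proof.
  intros HCB Hder; induction Hder.
  - now apply der_ref.
  - apply der_rule; auto.
Qed.

Lemma supp_mono (chi : form) (B C : base) :
  extends C B -> supp B chi -> supp C chi.
Proof.
  destruct chi; simpl; intros HCB Hsupp.
  - exact (derives_mono B C [] a HCB Hsupp).
  - intros p; exact (derives_mono B C [] p HCB (Hsupp p)).
  - intros D HDC; apply Hsupp; exact (extends_trans D C B HDC HCB).
  - intros D HDC; apply Hsupp; exact (extends_trans D C B HDC HCB).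
  - intros D HDC; apply Hsupp; exact (extends_trans D C B HDC HCB).
Qed.

(* The elimination clause of conjunctive support, abstracted over the
   property G that the eliminated formula guarantees in extensions. *)
Definition atomic_elim (B : base) (G : base -> Prop) : Prop :=
  forall C, extends C B -> forall p : atom,
    (forall D, extends D C -> G D -> derives D [] p) -> derives C [] p.

Lemma supp_and_atomic_elim (B : base) (phi psi : form) :
  supp B (And phi psi) -> atomic_elim B (fun D => supp D phi /\ supp D psi).
Proof.
  intros Hand C HCB p Hp.
  apply (Hand C HCB p); intros D HDC Hphi Hpsi; exact (Hp D HDC (conj Hphi Hpsi)).
Qed.

Lemma atomic_elim_mono (B C : base) (G : base -> Prop) :
  extends C B -> atomic_elim B G -> atomic_elim C G.
Proof.
  intros HCB Helim D HDC; exact (Helim D (extends_trans D C B HDC HCB)).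
Qed.

Lemma atomic_elim_supp (G : base -> Prop) (chi : form) : forall B : base,
  atomic_elim B G -> (forall C, extends C B -> G C -> supp C chi) -> supp B chi.
Proof.
  induction chi as [q | | chi1 _ chi2 _ | chi1 _ chi2 _ | chi1 _ chi2 IH2];
    intros B Helim Hchi; simpl.
  - exact (Helim B (extends_refl B) q Hchi).
  - intros p; apply (Helim B (extends_refl B) p).
    intros D HDB HG; exact (Hchi D HDB HG p).
  - intros C HCB p Hp; apply (Helim C HCB p); intros D HDC HG.
    apply (Hchi D (extends_trans D C B HDC HCB) HG D (extends_refl D)).
    intros E HED; apply Hp; exact (extends_trans E D C HED HDC).
  - intros C HCB p Hp1 Hp2; apply (Helim C HCB p); intros D HDC HG.
    apply (Hchi D (extends_trans D C B HDC HCB) HG D (extends_refl D)).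
    + intros E HED; apply Hp1; exact (extends_trans E D C HED HDC).
    + intros E HED; apply Hp2; exact (extends_trans E D C HED HDC).
  - intros C HCB Hchi1; apply IH2.
    + exact (atomic_elim_mono B C G HCB Helim).
    + intros D HDC HG.
      apply (Hchi D (extends_trans D C B HDC HCB) HG D (extends_refl D)).
      exact (supp_mono chi1 C D HDC Hchi1).
Qed.

Theorem mainTheorem4 (B : base) (phi psi chi : form) :
  supp B (And phi psi) -> supp_ctx B [phi; psi] chi -> supp B chi.
Proof.
  intros Hand Hctx.
  apply (atomic_elim_supp _ chi B (supp_and_atomic_elim B phi psi Hand)).
  intros C HCB [Hphi Hpsi]; apply (Hctx C HCB).
  intros g [<- | [<- | []]]; assumption.
Qed.
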